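(* Let $H:\mathcal P N\times Ł_1^S\to Ł_1$ be a playable Boolean effectivity function and let $n\ge1$. Define $E:\mathcal P N\times Ł_n^S\to Ł_n$ by $E(C,f)=\max\{\tfrac in\in Ł_n\mid H(C,\tau_{i/n}(f))=1\}$ (with $\tau_{0}(f)$ understood as the constant $1$, so the set is nonempty). Then $E$ is a playable $Ł_n$-valued effectivity function with $E^\sharp=H$. If moreover $H$ is truly playable, then $E$ is truly playable.
   Context: For a positive integer $n$ let $Ł_n=\{0,\frac1n,\dots,1\}$ with $\neg x=1-x$, $x\oplus y=\min(x+y,1)$, $x\odot y=\max(x+y-1,0)$, $\wedge=\min$, $\vee=\max$, applied pointwise on $Ł_n^S$; $0,1$ also denote constant functions; $Ł_1^S=\{0,1\}^S$. For $i\in\{1,\dots,n\}$, $\tau_{i/n}:Ł_n\to Ł_n$ is $\tau_{i/n}(x)=1$ if $x\ge i/n$ and $0$ otherwise, applied pointwise to functions. $E^\sharp$ is the restriction of $E$ to $\mathcal P N\times Ł_1^S$. Standing assumptions: $N$ finite, $|N|\ge2$, $|S|\ge2$; $\overline C=N\setminus C$. An $Ł_n$-valued effectivity function is any map $E:\mathcal P N\times Ł_n^S\to Ł_n$ (Boolean when $n=1$). It is: outcome monotonic if $f\ge g$ implies $E(C,f)\ge E(C,g)$; $N$-maximal if $\neg E(\varnothing,\neg f)\le E(N,f)$; superadditive if $E(C_1,f)\wedge E(C_2,g)\le E(C_1\cup C_2,f\wedge g)$ whenever $C_1\cap C_2=\varnothing$; homogeneous if $E(C,f\oplus f)=E(C,f)\oplus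 E(C,f)$ and $E(C,f\odot f)=E(C,f)\odot E(C,f)$; has liveness if $E(C,1)=1$ for all $C$; has safety if $E(C,0)=0$ for all $C$; principal if there is $g$ with $\{f\mid E(\varnothing,f)=1\}=\{f\mid f\ge g\odot\cdots\odot g\ (n\text{ factors})\}$. Playable: outcome monotonic, $N$-maximal, superadditive, homogeneous, liveness and safety; truly playable: playable and principal. *)

From mathcomp Require Import all_boot.
Set Implicit Arguments. Unset Strict Implicit. Unset Printing Implicit Defensive.

(* Ł_n = {0, 1/n, ..., 1}; the element i : 'I_n.+1 stands for i/n. *)
Definition L (n : nat) := 'I_n.+1.

Definition Lzero {n : nat} : L n := ord0.
Definition Lone {n : nat} : L n := ord_max.

Definition Lneg {n : nat} (x : L n) : L n := inord (n - x).
Definition Loplus {n : nat} (x y : L n) : L n := inord (minn (x + y) n).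
Definition Lodot {n : nat} (x y : L n) : L n := inord (x + y - n).
Definition Lmin {n : nat} (x y : L n) : L n := inord (minn x y).

Definition Lodot_pow {n : nat} (x : L n) : L n := iter n.-1 (Lodot x) x.

Definition EF (N : finType) (S : Type) (n : nat) := {set N} -> (S -> L n) -> L n.

Section Props.
Variables (N : finType) (S : Type) (n : nat) (E : EF N S n).

Definition outcome_monotonic :=
  forall C (f g : S -> L n), (forall s, g s <= f s) -> E C g <= E C f.

Definition N_maximal :=
  forall f : S -> L n, Lneg (E set0 (fun s => Lneg (f s))) <= E setT f.

Definition superadditive :=
  forall (C1 C2 : {set N}) (f g : S -> L n), [disjoint C1 & C2] ->
    Lmin (E C1 f) (E C2 g) <= E (C1 :|: C2) (fun s => Lmin (f s) (g s)).

Definition homogeneous :=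
  forall C (f : S -> L n),
    E C (fun s => Loplus (f s) (f s)) = Loplus (E C f) (E C f) /\
    E C (fun s => Lodot (f s) (f s)) = Lodot (E C f) (E C f).

Definition liveness := forall C, E C (fun _ => Lone) = Lone.
Definition safety := forall C, E C (fun _ => Lzero) = Lzero.

Definition principal :=
  exists g : S -> L n, forall f : S -> L n,
    E set0 f = Lone <-> (forall s, Lodot_pow (g s) <= f s).

Definition playable :=
  outcome_monotonic /\ N_maximal /\ superadditive /\ homogeneous /\
  liveness /\ safety.

Definition truly_playable := playable /\ principal.
End Props.

Definition emb1 (n : nat) (b : L 1) : L n := if val b == 1 then Lone else Lzero.

Definition sharp_eq (N : finType) (S : Type) (n : nat) (E : EF N S n) (H : EF N S 1) :=
  forall (C : {set N}) (f : S -> L 1),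
    E C (fun s => emb1 n (f s)) = emb1 n (H C f).

(* τ_{i/n}(f) as a Boolean function; for i = 0 it is the constant 1. *)
Definition tau (S : Type) (n : nat) (i : nat) (f : S -> L n) : S -> L 1 :=
  fun s => if i <= f s then Lone else Lzero.

Definition liftEF (N : finType) (S : Type) (n : nat) (H : EF N S 1) : EF N S n :=
  fun C f => inord (\max_(i < n.+1 | H C (tau i f) == Lone) (val i)).
Arguments liftEF {N S} n H.

From mathcomp Require Import all_boot zify.

Set Implicit Arguments.
Unset Strict Implicit.
Unset Printing Implicit Defensive.

(* Since tau_{i/n} (f) is antitone in i, the value E(C,f) is characterised by
   i/n <= E(C,f)  <->  H(C, tau_{i/n} (f)) = 1  for all i <= n, i.e. E acts on
   the cut functions tau_{i/n} (f) exactly as H does.  Every operation of the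
   MV-algebra is read off its cuts: the cuts of f /\ g and of the negation of f
   are the meets and negations of cuts of f and g, while those of f (+) f and
   f (.) f are single cuts of f.  Each axiom for E thus reduces to the same
   axiom for H applied to suitable cuts. *)

Lemma leq_Lmax n (x : L n) : x <= n.
Proof. by rewrite -ltnS. Qed.

Lemma val_Lneg n (x : L n) : Lneg x = n - x :> nat.
Proof. by rewrite inordK // ltnS leq_subr. Qed.

Lemma val_Lmin n (x y : L n) : Lmin x y = minn x y :> nat.
Proof. by rewrite inordK // ltnS geq_min leq_Lmax. Qed.

Lemma val_Loplus n (x y : L n) : Loplus x y = minn (x + y) n :> nat.
Proof. by rewrite inordK // ltnS geq_minr. Qed.

Lemma val_Lodot n (x y : L n) : Lodot x y = x + y - n :> nat.
Proof. by rewrite inordK // ltnS; have := leq_Lmax x; have := leq_Lmax y; lia. Qed.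

Lemma eq_Lone n (x : L n) : (x == Lone) = (n <= x).
Proof.
apply/eqP/idP => [-> // | le_nx]; apply: val_inj => /=.
by have := leq_Lmax x; lia.
Qed.

Lemma eq_L_cuts n (x y : L n) :
  (forall i, 0 < i <= n -> (i <= x) = (i <= y)) -> x = y.
Proof.
move=> cuts_xy; apply: val_inj => /=; apply/eqP; rewrite eqn_leq.
have cut_x : 0 < x -> x <= y by move=> x_gt0; rewrite -cuts_xy ?x_gt0 ?leq_Lmax.
have cut_y : 0 < y -> y <= x by move=> y_gt0; rewrite cuts_xy ?y_gt0 ?leq_Lmax.
by case: (posnP x) => [x0 | /cut_x]; case: (posnP y) => [y0 | /cut_y]; lia.
Qed.

Lemma leq_emb1 n (b : L 1) i : 0 < i <= n -> (i <= emb1 n b) = (b == Lone).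
Proof. by rewrite eq_Lone; case: b => -[|[|k]] lt_b //=; lia. Qed.

Lemma Lodot_pow_emb1 n (b : L 1) : Lodot_pow (emb1 n b) = emb1 n b.
Proof.
apply: iter_fix; apply: val_inj => /=; rewrite val_Lodot /emb1.
by case: ifP => /= _; lia.
Qed.

Section Cuts.
Variables (S : Type) (n : nat).
Implicit Types (f g : S -> L n) (s : S).

Lemma tau_eq f g i j :
  (forall s, (i <= g s) = (j <= f s)) -> forall s, tau i g s = tau j f s.
Proof. by move=> cuts_fg s; rewrite /tau cuts_fg. Qed.

Lemma tau_le f g i j s :
  i <= j -> (forall s, g s <= f s) -> tau j g s <= tau i f s.
Proof.
move=> le_ij le_gf; rewrite /tau; case: ifP => // le_j_gs.
by rewrite (leq_trans le_ij (leq_trans le_j_gs (le_gf s))).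
Qed.

Lemma tau_Lneg f i s :
  i <= n -> tau i.+1 (fun s => Lneg (f s)) s = Lneg (tau (n - i) f s).
Proof.
move=> le_in; apply: val_inj => /=; rewrite /tau !val_Lneg.
by have := leq_Lmax (f s); do 2![case: ifP => /=]; lia.
Qed.

Lemma tau_Lmin f g i s :
  tau i (fun s => Lmin (f s) (g s)) s = Lmin (tau i f s) (tau i g s).
Proof.
apply: val_inj => /=; rewrite /tau !val_Lmin.
by do 3![case: ifP => /=]; lia.
Qed.

Lemma tau_emb1 (h : S -> L 1) i :
  0 < i <= n -> forall s, tau i (fun s => emb1 n (h s)) s = h s.
Proof.
move=> i_range s; apply: val_inj; rewrite /tau leq_emb1 // eq_Lone.
by case: (h s) => -[|[|k]] //=.
Qed.

Lemma emb1_leq_tau f (b : L 1) s : (emb1 n b <= f s) = (b <= tau n f s).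
Proof. by rewrite /emb1 /tau; case: b => -[|[|k]] //=; case: ifP. Qed.

End Cuts.

Lemma outcome_monotonic_ext (N : finType) (S : Type) m (E : EF N S m) C
    (f g : S -> L m) :
  outcome_monotonic E -> (forall s, f s = g s) -> E C f = E C g.
Proof.
move=> E_mono eq_fg; apply: val_inj; apply/eqP.
by rewrite eqn_leq !E_mono // => s; rewrite eq_fg.
Qed.

Section Lift.
Variables (N : finType) (S : Type) (n : nat) (H : EF N S 1).
Hypotheses (H_mono : outcome_monotonic H) (H_live : liveness H).
Implicit Types (C : {set N}) (f g : S -> L n).

Local Notation E := (liftEF n H).

Lemma eq_H_cut C f i (h : S -> L 1) :
  (forall s, tau i f s = h s) -> H C (tau i f) = H C h.
Proof. exact: outcome_monotonic_ext. Qed.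

Lemma accepted_cut_mono C f g i j :
  i <= j -> (forall s, g s <= f s) ->
  H C (tau j g) == Lone -> H C (tau i f) == Lone.
Proof.
rewrite !eq_Lone => le_ij le_gf /leq_trans; apply.
by apply: H_mono => s; apply: tau_le.
Qed.

Lemma leq_liftEF C f i : i <= n -> (i <= E C f) = (H C (tau i f) == Lone).
Proof.
move=> le_in; set accepted := [pred j : 'I_n.+1 | H C (tau j f) == Lone].
have max_le : \max_(j in accepted) (j : nat) <= n.
  by apply/bigmax_leqP => j _; apply: leq_Lmax.
have accepted_nonempty : 0 < #|accepted|.
  by apply/card_gt0P; exists ord0; rewrite inE (eq_H_cut C (h := fun _ => Lone)) ?H_live.
rewrite /liftEF inordK ?ltnS //.
have [j0 accepted_j0 max_j0] := eq_bigmax_cond val accepted_nonempty.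
apply/idP/idP => [| accepted_i].
  by rewrite max_j0 => le_ij0; apply: accepted_cut_mono le_ij0 _ accepted_j0.
exact: (@leq_bigmax_cond _ accepted val (Ordinal (le_in : i < n.+1)) accepted_i).
Qed.

Lemma leq_liftEF_cuts C f g i j :
  i <= n -> j <= n -> (forall s, (i <= g s) = (j <= f s)) ->
  (i <= E C g) = (j <= E C f).
Proof.
by move=> le_in le_jn cuts_fg; rewrite !leq_liftEF // (eq_H_cut C (tau_eq cuts_fg)).
Qed.

Lemma liftEF_comp (phi : L n -> L n) (t : nat -> nat) :
  (forall i, i <= n -> t i <= n) ->
  (forall i (x : L n), 0 < i <= n -> (i <= phi x) = (t i <= x)) ->
  forall C f, E C (fun s => phi (f s)) = phi (E C f).
Proof.
move=> t_le cut_phi C f; apply: eq_L_cuts => i i_range.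
have le_in := (andP i_range).2.
rewrite cut_phi // (leq_liftEF_cuts C (f := f) le_in (t_le _ le_in)) //.
by move=> s; rewrite cut_phi.
Qed.

Lemma liftEF_monotonic : outcome_monotonic E.
Proof.
move=> C f g le_gf; rewrite leq_liftEF ?leq_Lmax //.
by apply: accepted_cut_mono (leqnn _) le_gf _; rewrite -leq_liftEF ?leq_Lmax.
Qed.

Lemma liftEF_N_maximal : N_maximal H -> N_maximal E.
Proof.
move=> H_max f; rewrite val_Lneg; set k := (E set0 _ : nat).
have [lt_kn | ge_kn] := ltnP k n; last by have -> : n - k = 0 by lia.
have rejected : H set0 (tau k.+1 (fun s => Lneg (f s))) = 0 :> nat.
  by apply/eqP; rewrite -leqn0 leqNgt -eq_Lone -leq_liftEF // ltnn.
have cut_neg : H set0 (fun s => Lneg (tau (n - k) f s))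
               = H set0 (tau k.+1 (fun s => Lneg (f s))).
  by apply: outcome_monotonic_ext => // s; rewrite tau_Lneg // ltnW.
rewrite leq_liftEF ?leq_subr // eq_Lone.
by apply: leq_trans (H_max (tau (n - k) f)); rewrite val_Lneg cut_neg rejected.
Qed.

Lemma liftEF_superadditive : superadditive H -> superadditive E.
Proof.
move=> H_sup C1 C2 f g disjC; rewrite val_Lmin; set m := minn _ _.
have le_mn : m <= n by rewrite geq_min leq_Lmax.
have accepted_f : H C1 (tau m f) == Lone by rewrite -leq_liftEF ?geq_minl.
have accepted_g : H C2 (tau m g) == Lone by rewrite -leq_liftEF ?geq_minr.
have cut_min : H (C1 :|: C2) (fun s => Lmin (tau m f s) (tau m g s))
               = H (C1 :|: C2) (tau m (fun s => Lmin (f s) (g s))).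
  by apply: outcome_monotonic_ext => // s; rewrite tau_Lmin.
rewrite leq_liftEF // eq_Lone -cut_min.
have := H_sup _ _ (tau m f) (tau m g) disjC.
by rewrite (eqP accepted_f) (eqP accepted_g) val_Lmin.
Qed.

Lemma liftEF_homogeneous : homogeneous E.
Proof.
move=> C f; split.
  apply: (liftEF_comp (phi := fun x => Loplus x x) (t := uphalf)) => [i | i x].
    lia.
  by rewrite val_Loplus; have := leq_Lmax x; lia.
apply: (liftEF_comp (phi := fun x => Lodot x x) (t := fun i => uphalf (i + n))).
  by move=> i; lia.
by move=> i x; rewrite val_Lodot; have := leq_Lmax x; lia.
Qed.

Lemma liftEF_liveness : liveness E.
Proof.
move=> C; apply: eq_L_cuts => i /andP[_ le_in].
have cut_one (s : S) : tau i (fun _ => @Lone n) s = Lone by rewrite /tau /= le_in.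
by rewrite leq_liftEF // (eq_H_cut C cut_one) H_live le_in.
Qed.

Lemma liftEF_safety : safety H -> safety E.
Proof.
move=> H_safe C; apply: eq_L_cuts => i /andP[i_gt0 le_in].
have cut_zero (s : S) : tau i (fun _ => @Lzero n) s = Lzero by rewrite /tau leqNgt i_gt0.
by rewrite leq_liftEF // (eq_H_cut C cut_zero) H_safe leqNgt i_gt0.
Qed.

Lemma liftEF_sharp : sharp_eq E H.
Proof.
move=> C f; apply: eq_L_cuts => i i_range.
by rewrite leq_liftEF ?(andP i_range).2 // (eq_H_cut C (tau_emb1 f i_range)) leq_emb1.
Qed.

Lemma liftEF_principal : principal H -> principal E.
Proof.
case=> g H_gen; exists (fun s => emb1 n (g s)) => f.
have accepted_top : (E set0 f == Lone) = (H set0 (tau n f) == Lone).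
  by rewrite eq_Lone leq_liftEF.
split=> [/eqP | le_gf].
  rewrite accepted_top => /eqP /H_gen le_gf s.
  by rewrite Lodot_pow_emb1 emb1_leq_tau; apply: le_gf.
apply/eqP; rewrite accepted_top; apply/eqP/H_gen => s.
by rewrite -emb1_leq_tau -Lodot_pow_emb1; apply: le_gf.
Qed.

End Lift.

Theorem mainTheorem4 (N : finType) (S : Type) (n : nat) (H : EF N S 1) :
  1 < #|N| -> (exists s1 s2 : S, s1 <> s2) -> 1 <= n ->
  playable H ->
  playable (liftEF n H) /\ sharp_eq (liftEF n H) H /\
  (truly_playable H -> truly_playable (liftEF n H)).
Proof.
move=> _ _ _ [H_mono [H_max [H_sup [_ [H_live H_safe]]]]].
have E_playable : playable (liftEF n H).
  split; first exact: liftEF_monotonic.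
  split; first exact: liftEF_N_maximal.
  split; first exact: liftEF_superadditive.
  split; first exact: liftEF_homogeneous.
  split; first exact: liftEF_liveness.
  exact: liftEF_safety.
split=> //; split; first exact: liftEF_sharp.
by case=> _ H_principal; split=> //; apply: liftEF_principal.
Qed.
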